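(* Let $\theta$ be a renormalised labelled tree (as defined below) such that $\Psi_{n_\ell}(\omega\cdot\nu_\ell)\neq0$ for every line $\ell$ of $\theta$ with $n_\ell\ge0$ (this holds in particular whenever the value of $\theta$ is non-zero). Then for every $n\ge0$, $$\mathfrak{N}_n(\theta)\le 2^{-(m_n-2)}K(\theta),$$ where $\mathfrak{N}_n(\theta)$ is the number of lines of $\theta$ with scale $\ge n$ and $K(\theta):=\sum_{v}|\nu_v|$, the sum running over all nodes of $\theta$.
   Context: Notation: $\omega\in\mathbb{R}^d$ satisfies the Bryuno condition; $\alpha_m(\omega):=\inf_{0<|\nu|\le2^m}|\omega\cdot\nu|$ with $|\nu|$ the $\ell^1$ norm; $m_0=0$, $m_{n+1}=m_n+p_n+1$ with $p_n:=\max\{q\ge0:\alpha_{m_n}(\omega)<2\alpha_{m_n+q}(\omega)\}$. $\chi$ is an even $C^\infty$ function, non-increasing in $|x|$, equal to $1$ for $|x|\le1/2$ and $0$ for $|x|\ge1$; $\chi_{-1}\equiv1$, $\chi_n(x)=\chi(4x/\alpha_{m_n}(\omega))$, $\psi_n=1-\chi_n$ ($n\ge0$), $\Psi_n=\chi_{n-1}\psi_n$ ($n\ge0$); thus $\Psi_n(x)\neq0$ implies $\alpha_{m_n}(\omega)/8<|x|<\alpha_{m_{n-1}}(\omega)/4$ (with $\alpha_{m_{-1}}:=+\infty$). Trees: a tree $\theta$ is a finite rooted tree whose root has exactly one incident line (the root line); all other vertices are nodes; lines are oriented toward the root, and each line $\ell=\ell_v$ is identified with the node $v$ it leaves. Write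 $w\preceq v$ if $v$ lies on the path from $w$ to the root. Each node $v$ carries a mode $\nu_v\in\mathbb{Z}^d$; each line $\ell_v$ carries the momentum $\nu_{\ell_v}=\sum_{w\preceq v}\nu_w$, required to be nonzero for all lines except possibly the root line; each line carries a scale $n_\ell$, with $n_\ell=-1$ if $\nu_\ell=0$ and $n_\ell\in\{0,1,2,\dots\}$ otherwise. A cluster on scale $n$ is a maximal connected subgraph (set of nodes together with the lines of $\theta$ joining them) all of whose lines have scale $\le n$ and at least one line of which has scale $n$; a line enters (exits) a subgraph $T$ if it connects a node outside $T$ to a node in $T$ (a node in $T$ to a node outside). A self-energy cluster is either a cluster with exactly one entering line $\ell'$ and one exiting line $\ell$ satisfying $\nu_\ell=\nu_{\ell'}$, or (scale $-1$) a single node $v$ with $\nu_v=0$ having exactly one entering line. A tree is renormalised if it contains no self-energy clusters. *)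

From Stdlib Require Import Reals Lra Lia ZArith Arith List Relations.
Import ListNotations.
Open Scope R_scope.

(** * Vectors in Z^d and R^d
    A vector of Z^d (resp. R^d) is a function nat -> Z (resp. nat -> R);
    only the components i < d are meaningful, all operations below
    only look at those components. *)
Definition zvec := nat -> Z.
Definition rvec := nat -> R.

Definition znorm1 (d : nat) (nu : zvec) : Z :=
  fold_right (fun i acc => (Z.abs (nu i) + acc)%Z) 0%Z (seq 0 d).

Definition dot (d : nat) (om : rvec) (nu : zvec) : R :=
  fold_right (fun i acc => om i * IZR (nu i) + acc) 0 (seq 0 d).

Definition zvec_eq (d : nat) (a b : zvec) : Prop := forall i, (i < d)%nat -> a i = b i.
Definition zvec_zero (d : nat) (a : zvec) : Prop := forall i, (i < d)%nat -> a i = 0%Z.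

Definition alpha_set (d : nat) (om : rvec) (m : nat) (x : R) : Prop :=
  exists nu : zvec, (0 < znorm1 d nu)%Z /\ (znorm1 d nu <= 2 ^ Z.of_nat m)%Z
                    /\ x = Rabs (dot d om nu).

Definition is_inf (E : R -> Prop) (x : R) : Prop :=
  (forall y, E y -> x <= y) /\ (forall z, (forall y, E y -> z <= y) -> z <= x).

Definition is_alpha (d : nat) (om : rvec) (alpha : nat -> R) : Prop :=
  forall m, is_inf (alpha_set d om m) (alpha m).

Definition bryuno (alpha : nat -> R) : Prop :=
  (forall m, 0 < alpha m) /\
  exists l, Un_cv (fun N => sum_f_R0 (fun m => (/ 2) ^ m * ln (/ alpha m)) N) l.

Definition is_p (alpha : nat -> R) (mn p : nat) : Prop :=
  alpha mn < 2 * alpha (mn + p)%nat /\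
  forall q, alpha mn < 2 * alpha (mn + q)%nat -> (q <= p)%nat.

Definition is_m_seq (alpha : nat -> R) (m : nat -> nat) : Prop :=
  m 0%nat = 0%nat /\
  forall n, exists p, is_p alpha (m n) p /\ m (S n) = (m n + p + 1)%nat.

Definition smooth (f : R -> R) : Prop :=
  exists D : nat -> R -> R, D 0%nat = f /\
    forall k x, derivable_pt_lim (D k) x (D (S k) x).

Definition is_cutoff (chi : R -> R) : Prop :=
  smooth chi /\
  (forall x, chi (- x) = chi x) /\
  (forall x y, Rabs x <= Rabs y -> chi y <= chi x) /\
  (forall x, Rabs x <= / 2 -> chi x = 1) /\
  (forall x, 1 <= Rabs x -> chi x = 0).

Definition chi_n (chi : R -> R) (alpha : nat -> R) (m : nat -> nat) (n : nat) (x : R) : R :=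
  chi (4 * x / alpha (m n)).

(* Psi_n = chi_{n-1} psi_n, with chi_{-1} = 1 and psi_n = 1 - chi_n *)
Definition Psi (chi : R -> R) (alpha : nat -> R) (m : nat -> nat) (n : nat) (x : R) : R :=
  match n with
  | O => 1 * (1 - chi_n chi alpha m 0 x)
  | S k => chi_n chi alpha m k x * (1 - chi_n chi alpha m (S k) x)
  end.

(** * Labelled trees
    Nodes are 0, ..., tN-1.  Node 0 is the node whose line is the root line;
    every other node v has a parent [tpar v = Some u] with u < v (every finite
    rooted tree admits such a numbering).  The line l_v leaving v is
    identified with v.  [tmode v] is nu_v, [tscale v] is the scale n_{l_v}. *)
Record tree := mkTree {
  tN : nat;
  tpar : nat -> option nat;
  tmode : nat -> zvec;
  tscale : nat -> Z
}.

Definition nodes (t : tree) : list nat := seq 0 (tN t).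

Definition tree_wf (t : tree) : Prop :=
  (1 <= tN t)%nat /\ tpar t 0%nat = None /\
  forall v, (0 < v < tN t)%nat -> exists u, tpar t v = Some u /\ (u < v)%nat.

(* below t w v : w ⪯ v, i.e. v lies on the path from w to the root *)
Fixpoint below_fuel (t : tree) (k w v : nat) : bool :=
  Nat.eqb w v ||
  match k with
  | O => false
  | S k' => match tpar t w with Some u => below_fuel t k' u v | None => false end
  end.
Definition below (t : tree) (w v : nat) : bool := below_fuel t (S w) w v.

Definition momentum (t : tree) (v : nat) : zvec :=
  fun i => fold_right (fun w acc => (tmode t w i + acc)%Z) 0%Z
             (filter (fun w => below t w v) (nodes t)).

Definition labelled_ok (d : nat) (t : tree) : Prop :=
  (forall v, (0 < v < tN t)%nat -> ~ zvec_zero d (momentum t v)) /\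
  (forall v, (v < tN t)%nat ->
     (zvec_zero d (momentum t v) -> tscale t v = (-1)%Z) /\
     (~ zvec_zero d (momentum t v) -> (0 <= tscale t v)%Z)).

Definition nodeset := nat -> Prop.

Definition in_tree (t : tree) (T : nodeset) : Prop := forall v, T v -> (v < tN t)%nat.

Definition internal_line (t : tree) (T : nodeset) (v : nat) : Prop :=
  (v < tN t)%nat /\ T v /\ exists u, tpar t v = Some u /\ T u.

Definition sub_edge (t : tree) (T : nodeset) (x y : nat) : Prop :=
  T x /\ T y /\ tpar t x = Some y.

Definition connected (t : tree) (T : nodeset) : Prop :=
  (exists v, T v) /\
  forall a b, T a -> T b -> clos_refl_sym_trans nat (sub_edge t T) a b.

Definition lines_le (t : tree) (n : Z) (T : nodeset) : Prop :=
  forall v, internal_line t T v -> (tscale t v <= n)%Z.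

Definition cluster (t : tree) (n : Z) (T : nodeset) : Prop :=
  in_tree t T /\ connected t T /\ lines_le t n T /\
  (forall T', in_tree t T' -> connected t T' -> lines_le t n T' ->
     (forall v, T v -> T' v) -> forall v, T' v -> T v) /\
  (exists v, internal_line t T v /\ tscale t v = n).

Definition entering (t : tree) (T : nodeset) (w : nat) : Prop :=
  (w < tN t)%nat /\ ~ T w /\ exists u, tpar t w = Some u /\ T u.
Definition exiting (t : tree) (T : nodeset) (v : nat) : Prop :=
  (v < tN t)%nat /\ T v /\ (tpar t v = None \/ exists u, tpar t v = Some u /\ ~ T u).

Definition self_energy (d : nat) (t : tree) (T : nodeset) : Prop :=
  (exists n, cluster t n T /\
     exists w v, entering t T w /\ (forall w', entering t T w' -> w' = w) /\
                 exiting t T v /\ (forall v', exiting t T v' -> v' = v) /\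
                 zvec_eq d (momentum t v) (momentum t w)) \/
  (exists v, (v < tN t)%nat /\ (forall x, T x <-> x = v) /\ zvec_zero d (tmode t v) /\
     exists w, entering t T w /\ (forall w', entering t T w' -> w' = w)).

Definition renormalised (d : nat) (t : tree) : Prop :=
  forall T : nodeset, ~ self_energy d t T.

Definition count_scale_ge (t : tree) (n : nat) : nat :=
  length (filter (fun v => Z.leb (Z.of_nat n) (tscale t v)) (nodes t)).

Definition Kval (d : nat) (t : tree) : Z :=
  fold_right (fun v acc => (znorm1 d (tmode t v) + acc)%Z) 0%Z (nodes t).

(* For a line [l] of scale at least [n], let [N(l)] and [K(l)] be the number of lines of scale at
   least [n] and the sum of the [|nu_v|] in the subtree ending in [l]. We show
   [2^(m_n) (N(l) + 1) <= 4 K(l)] by induction over the lines of scale at least [n] immediately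
   preceding [l]. Since [Psi_(k+1)(x) <> 0] forces [|x| < alpha_(m_k) / 4], a nonzero [nu] with
   [|omega . nu| < alpha_(m_k) / 2] satisfies [|nu| > 2^(m_(k+1) - 1)] by the choice of [m_(k+1)].
   If nothing precedes [l], this applies to [nu_l], and [|nu_l| <= K(l)]. If exactly one line [l']
   precedes [l], renormalisation gives [nu_l <> nu_l'] (the lines in between would otherwise form
   a self-energy cluster), and it applies to [nu_l - nu_l'], the sum of the modes between [l'] and
   [l]. With two or more preceding lines the induction hypotheses leave enough room. At the root
   this gives [N_n(theta) <= 2^(2 - m_n) K(theta)]. *)

From Stdlib Require Import Reals ZArith Lra Lia List Classical Relations.
Import ListNotations.
Open Scope R_scope.

Fixpoint sumZ (l : list nat) (f : nat -> Z) : Z :=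
  match l with [] => 0%Z | x :: l' => (f x + sumZ l' f)%Z end.

Section ListSums.
Local Open Scope Z_scope.

Lemma fold_right_sumZ l f : fold_right (fun x acc => f x + acc) 0 l = sumZ l f.
Proof. induction l; simpl; congruence. Qed.

Lemma sumZ_ext l f g : (forall x, In x l -> f x = g x) -> sumZ l f = sumZ l g.
Proof. induction l; simpl; intros H; auto. rewrite H, IHl; auto. Qed.

Lemma sumZ_le l f g : (forall x, In x l -> f x <= g x) -> sumZ l f <= sumZ l g.
Proof.
  induction l; simpl; intros H; [lia|].
  specialize (H a (or_introl eq_refl)) as Ha.
  specialize (IHl (fun x Hx => H x (or_intror Hx))). lia.
Qed.

Lemma sumZ_add l f g : sumZ l (fun x => f x + g x) = sumZ l f + sumZ l g.
Proof. induction l; simpl; lia. Qed.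

Lemma sumZ_mul_l l c f : sumZ l (fun x => c * f x) = c * sumZ l f.
Proof. induction l; simpl; [lia|]. rewrite IHl. ring. Qed.

Lemma sumZ_const_1 l : sumZ l (fun _ => 1) = Z.of_nat (length l).
Proof. induction l; cbn [sumZ length]; rewrite ?Nat2Z.inj_succ; lia. Qed.

Lemma sumZ_zero l f : (forall x, In x l -> f x = 0) -> sumZ l f = 0.
Proof. induction l; simpl; intros H; auto. rewrite H, IHl; auto. Qed.

Lemma sumZ_nonneg l f : (forall x, In x l -> 0 <= f x) -> 0 <= sumZ l f.
Proof. intros H. apply (sumZ_le l (fun _ => 0)) in H. rewrite sumZ_zero in H; auto. Qed.

Lemma sumZ_ge_term l f x : (forall y, In y l -> 0 <= f y) -> In x l -> f x <= sumZ l f.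
Proof.
  induction l as [|a l IH]; simpl; intros H Hx; [contradiction|]. destruct Hx as [<-|Hx].
  - pose proof (sumZ_nonneg l f (fun y Hy => H y (or_intror Hy))). lia.
  - pose proof (H a (or_introl eq_refl)). pose proof (IH (fun y Hy => H y (or_intror Hy)) Hx). lia.
Qed.

Lemma sumZ_abs_le l f : Z.abs (sumZ l f) <= sumZ l (fun x => Z.abs (f x)).
Proof. induction l; simpl; lia. Qed.

Lemma sumZ_swap l l' g :
  sumZ l (fun x => sumZ l' (fun y => g x y)) = sumZ l' (fun y => sumZ l (fun x => g x y)).
Proof.
  induction l; simpl.
  - symmetry. now apply sumZ_zero.
  - rewrite IHl, <- sumZ_add. reflexivity.
Qed.

Lemma sumZ_filter l (p : nat -> bool) f :
  sumZ (filter p l) f = sumZ l (fun x => if p x then f x else 0).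
Proof. induction l; simpl; auto. destruct (p a); simpl; rewrite IHl; lia. Qed.

Lemma length_filter_sumZ l (p : nat -> bool) :
  Z.of_nat (length (filter p l)) = sumZ l (fun x => if p x then 1 else 0).
Proof.
  induction l; cbn [sumZ filter]; auto.
  destruct (p a); cbn [length]; rewrite ?Nat2Z.inj_succ; lia.
Qed.

Lemma sumZ_at_most_one l (p : nat -> bool) c : NoDup l ->
  (forall x y, In x l -> In y l -> p x = true -> p y = true -> x = y) ->
  sumZ l (fun x => if p x then c else 0) = if existsb p l then c else 0.
Proof.
  induction l as [|a l IH]; simpl; intros Hnd Huniq; auto.
  inversion_clear Hnd as [|? ? Ha Hnd'].
  rewrite IH; auto.
  destruct (p a) eqn:Hpa, (existsb p l) eqn:Hex; simpl; try lia.
  apply existsb_exists in Hex as [x [Hx Hpx]].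
  destruct Ha. rewrite <- (Huniq x a); auto.
Qed.

End ListSums.

Section Norms.
Local Open Scope Z_scope.
Variable d : nat.

Lemma znorm1_sumZ x : znorm1 d x = sumZ (seq 0 d) (fun i => Z.abs (x i)).
Proof. apply fold_right_sumZ. Qed.

Lemma znorm1_ext x y : (forall i, (i < d)%nat -> x i = y i) -> znorm1 d x = znorm1 d y.
Proof.
  intros H. rewrite !znorm1_sumZ. apply sumZ_ext.
  intros i Hi. apply in_seq in Hi. rewrite H; auto. lia.
Qed.

Lemma znorm1_nonneg x : 0 <= znorm1 d x.
Proof. rewrite znorm1_sumZ. apply sumZ_nonneg. lia. Qed.

Lemma znorm1_pos x : ~ zvec_zero d x -> 0 < znorm1 d x.
Proof.
  intros Hx. pose proof (znorm1_nonneg x).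
  destruct (Z.eq_dec (znorm1 d x) 0) as [H0|]; [|lia].
  exfalso. apply Hx. intros i Hi.
  pose proof (sumZ_ge_term (seq 0 d) (fun j => Z.abs (x j)) i) as Hle.
  rewrite <- znorm1_sumZ in Hle.
  enough (Z.abs (x i) <= 0) by lia.
  rewrite <- H0. apply Hle; [intros; lia | apply in_seq; lia].
Qed.

Lemma znorm1_sumZ_le l (g : nat -> zvec) :
  znorm1 d (fun i => sumZ l (fun x => g x i)) <= sumZ l (fun x => znorm1 d (g x)).
Proof.
  rewrite znorm1_sumZ. eapply Z.le_trans.
  - apply sumZ_le. intros i _. apply sumZ_abs_le.
  - rewrite sumZ_swap. apply sumZ_le. intros x _. rewrite znorm1_sumZ. lia.
Qed.

End Norms.

Section TreeOrder.
Variable t : tree.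
Hypothesis Hwf : tree_wf t.

Lemma parent_lt w u : (w < tN t)%nat -> tpar t w = Some u -> (u < w)%nat.
Proof.
  destruct Hwf as [_ [Hroot Hpar]]. intros Hw Hu. destruct w as [|w].
  - congruence.
  - destruct (Hpar (S w)) as [u' [Hu' Hlt]]; [lia|congruence].
Qed.

Lemma below_fuel_succ k w v : (w < tN t)%nat -> (w < k)%nat ->
  below_fuel t k w v = below_fuel t (S k) w v.
Proof.
  revert w; induction k as [|k IH]; intros w Hw Hk; [lia|].
  cbn [below_fuel]. f_equal.
  destruct (tpar t w) as [u|] eqn:Hu; auto.
  pose proof (parent_lt w u Hw Hu). apply IH; lia.
Qed.

Lemma below_fuel_large k w v : (w < tN t)%nat -> (w < k)%nat ->
  below_fuel t k w v = below t w v.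
Proof.
  intros Hw Hk. induction Hk as [|k Hk IH]; [reflexivity|].
  rewrite <- below_fuel_succ; auto.
Qed.

Lemma below_unfold w v : (w < tN t)%nat ->
  below t w v = (Nat.eqb w v || match tpar t w with Some u => below t u v | None => false end)%bool.
Proof.
  intros Hw. unfold below at 1. cbn [below_fuel]. f_equal.
  destruct (tpar t w) as [u|] eqn:Hu; auto.
  pose proof (parent_lt w u Hw Hu). apply below_fuel_large; lia.
Qed.

Lemma below_refl w : below t w w = true.
Proof. unfold below. cbn [below_fuel]. now rewrite Nat.eqb_refl. Qed.

Lemma below_parent w u v : (w < tN t)%nat -> tpar t w = Some u ->
  below t u v = true -> below t w v = true.
Proof. intros Hw Hu Huv. rewrite below_unfold, Hu, Huv; auto. apply Bool.orb_true_r. Qed.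

Lemma below_inv w v : (w < tN t)%nat -> below t w v = true ->
  w = v \/ exists u, tpar t w = Some u /\ (u < w)%nat /\ below t u v = true.
Proof.
  intros Hw Hwv. rewrite below_unfold in Hwv; auto.
  apply Bool.orb_true_iff in Hwv as [Heq|Hpar].
  - left. now apply Nat.eqb_eq.
  - right. destruct (tpar t w) as [u|] eqn:Hu; [|discriminate].
    exists u. split; [|split]; auto. eapply parent_lt; eauto.
Qed.

Lemma below_le w v : (w < tN t)%nat -> below t w v = true -> (v <= w)%nat.
Proof.
  induction w as [w IH] using lt_wf_ind. intros Hw Hwv.
  destruct (below_inv w v Hw Hwv) as [->|[u [_ [Hlt Huv]]]]; [lia|].
  specialize (IH u Hlt ltac:(lia) Huv). lia.
Qed.

Lemma below_trans a b c : (a < tN t)%nat -> below t a b = true ->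
  below t b c = true -> below t a c = true.
Proof.
  induction a as [a IH] using lt_wf_ind. intros Ha Hab Hbc.
  destruct (below_inv a b Ha Hab) as [->|[u [Hu [Hlt Hub]]]]; auto.
  eapply below_parent; eauto. apply (IH u); auto; lia.
Qed.

Lemma below_antisym a b : (a < tN t)%nat -> below t a b = true ->
  below t b a = true -> a = b.
Proof.
  intros Ha Hab Hba. pose proof (below_le a b Ha Hab).
  pose proof (below_le b a ltac:(lia) Hba). lia.
Qed.

Lemma below_total w a b : (w < tN t)%nat -> below t w a = true ->
  below t w b = true -> below t a b = true \/ below t b a = true.
Proof.
  induction w as [w IH] using lt_wf_ind. intros Hw Ha Hb.
  destruct (below_inv w a Hw Ha) as [->|[u [Hu [Hlt Hua]]]]; auto.
  destruct (below_inv w b Hw Hb) as [->|[u' [Hu' [_ Hub]]]]; auto.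
  rewrite Hu in Hu'. injection Hu' as <-. apply (IH u); auto; lia.
Qed.

Lemma below_root w : (w < tN t)%nat -> below t w 0 = true.
Proof.
  induction w as [w IH] using lt_wf_ind. intros Hw.
  destruct w as [|w]; [apply below_refl|].
  destruct Hwf as [_ [_ Hpar]]. destruct (Hpar (S w)) as [u [Hu Hlt]]; [lia|].
  eapply below_parent; eauto. apply IH; lia.
Qed.

End TreeOrder.

Definition scale_ge (t : tree) (n w : nat) : bool := Z.leb (Z.of_nat n) (tscale t w).

Definition strictly_below (t : tree) (a b : nat) : bool := (below t a b && negb (Nat.eqb a b))%bool.

Definition preceding (t : tree) (n v : nat) : list nat :=
  filter (fun u => scale_ge t n u && strictly_below t u v &&
    forallb (fun x => negb (scale_ge t n x && strictly_below t u x && strictly_below t x v))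
      (nodes t))%bool (nodes t).

Definition between (t : tree) (u v w : nat) : bool := (below t w v && negb (below t w u))%bool.

Definition subtree_sum (t : tree) (v : nat) (f : nat -> Z) : Z :=
  sumZ (nodes t) (fun w => if below t w v then f w else 0%Z).

Definition scale_count (t : tree) (n v : nat) : Z :=
  subtree_sum t v (fun w => if scale_ge t n w then 1%Z else 0%Z).

Definition subtree_K (d : nat) (t : tree) (v : nat) : Z :=
  subtree_sum t v (fun w => znorm1 d (tmode t w)).

Lemma in_nodes t w : In w (nodes t) <-> (w < tN t)%nat.
Proof. unfold nodes. rewrite in_seq. lia. Qed.

Lemma sumZ_nodes_eqb t v c : (v < tN t)%nat ->
  sumZ (nodes t) (fun w => if Nat.eqb w v then c else 0%Z) = c.
Proof.
  intros Hv. rewrite sumZ_at_most_one; [|apply seq_NoDup|].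
  - replace (existsb _ (nodes t)) with true; auto.
    symmetry. apply existsb_exists. exists v. rewrite in_nodes, Nat.eqb_refl. auto.
  - intros a b _ _ Ha Hb. apply Nat.eqb_eq in Ha, Hb. congruence.
Qed.

Lemma strictly_below_spec t a b : strictly_below t a b = true <-> below t a b = true /\ a <> b.
Proof.
  unfold strictly_below. rewrite Bool.andb_true_iff, Bool.negb_true_iff, Nat.eqb_neq. tauto.
Qed.

Section SubtreeSums.
Variables (t : tree) (n : nat).
Hypothesis Hwf : tree_wf t.

Lemma preceding_spec v u : In u (preceding t n v) ->
  (u < tN t)%nat /\ scale_ge t n u = true /\ below t u v = true /\ u <> v.
Proof.
  unfold preceding. rewrite filter_In, in_nodes, !Bool.andb_true_iff, strictly_below_spec. tauto.
Qed.

Lemma preceding_cover v x : (x < tN t)%nat -> scale_ge t n x = true ->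
  below t x v = true -> x <> v -> exists u, In u (preceding t n v) /\ below t x u = true.
Proof.
  induction x as [x IH] using lt_wf_ind. intros Hx Hsx Hxv Hne.
  destruct (forallb (fun y => negb (scale_ge t n y && strictly_below t x y && strictly_below t y v))
              (nodes t)) eqn:Hfree.
  - exists x. split; [|apply below_refl].
    unfold preceding. rewrite filter_In, in_nodes, Hsx, Hfree.
    assert (strictly_below t x v = true) as -> by now apply strictly_below_spec. auto.
  - apply Bool.not_true_iff_false in Hfree. rewrite forallb_forall in Hfree.
    apply not_all_ex_not in Hfree as [y Hy]. apply imply_to_and in Hy as [Hyt Hy].
    rewrite Bool.negb_true_iff, Bool.not_false_iff_true, !Bool.andb_true_iff,
      !strictly_below_spec in Hy.
    destruct Hy as [[Hsy [Hxy Hne']] [Hyv Hne'']].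
    pose proof (below_le t Hwf x y Hx Hxy).
    destruct (IH y ltac:(lia) ltac:(lia) Hsy Hyv Hne'') as [u [Hu Hyu]].
    exists u. split; auto. eapply below_trans; eauto.
Qed.

Lemma preceding_unique v x u1 u2 : (x < tN t)%nat ->
  In u1 (preceding t n v) -> In u2 (preceding t n v) ->
  below t x u1 = true -> below t x u2 = true -> u1 = u2.
Proof.
  assert (nested : forall a b, In a (preceding t n v) -> In b (preceding t n v) ->
                     below t a b = true -> a = b).
  { intros a b Ha Hb Hab. destruct (Nat.eq_dec a b) as [|Hne]; auto. exfalso.
    pose proof (preceding_spec v b Hb) as [_ [Hsb [Hbv Hbne]]].
    unfold preceding in Ha. rewrite filter_In, !Bool.andb_true_iff, forallb_forall in Ha.
    destruct Ha as [_ [_ Hfree]].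
    specialize (Hfree b (proj2 (in_nodes t b) (proj1 (preceding_spec v b Hb)))).
    rewrite Hsb in Hfree.
    assert (strictly_below t a b = true) as Hab' by now apply strictly_below_spec.
    assert (strictly_below t b v = true) as Hbv' by now apply strictly_below_spec.
    rewrite Hab', Hbv' in Hfree. discriminate. }
  intros Hx H1 H2 Hx1 Hx2.
  destruct (below_total t Hwf x u1 u2 Hx Hx1 Hx2); [|symmetry]; auto.
Qed.

Lemma covered_below v w : (w < tN t)%nat -> existsb (below t w) (preceding t n v) = true ->
  below t w v = true /\ w <> v.
Proof.
  intros Hw Hcov. apply existsb_exists in Hcov as [u [Hu Hwu]].
  destruct (preceding_spec v u Hu) as [Hut [_ [Huv Hne]]].
  split; [eapply below_trans; eauto|].
  intros ->. apply Hne. apply (below_antisym t Hwf); auto.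
Qed.

Lemma subtree_sum_preceding v f :
  sumZ (preceding t n v) (fun u => subtree_sum t u f)
  = sumZ (nodes t) (fun w => if existsb (below t w) (preceding t n v) then f w else 0%Z).
Proof.
  unfold subtree_sum. rewrite sumZ_swap. apply sumZ_ext. intros w Hw.
  apply sumZ_at_most_one.
  - apply NoDup_filter, seq_NoDup.
  - intros u1 u2 H1 H2. apply (preceding_unique v w); auto. now apply in_nodes.
Qed.

Lemma subtree_sum_preceding_le v f : (forall w, (0 <= f w)%Z) ->
  (sumZ (preceding t n v) (fun u => subtree_sum t u f) <= subtree_sum t v f)%Z.
Proof.
  intros Hf. rewrite subtree_sum_preceding. apply sumZ_le. intros w Hw.
  apply in_nodes in Hw.
  destruct (existsb _ _) eqn:Hcov.
  - now rewrite (proj1 (covered_below v w Hw Hcov)).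
  - destruct (below t w v); [apply Hf | lia].
Qed.

Lemma subtree_sum_split u v f : (u < tN t)%nat -> below t u v = true ->
  subtree_sum t v f
  = (subtree_sum t u f + sumZ (nodes t) (fun w => if between t u v w then f w else 0))%Z.
Proof.
  intros Hu Huv. unfold subtree_sum, between. rewrite <- sumZ_add.
  apply sumZ_ext. intros w Hw. apply in_nodes in Hw.
  destruct (below t w u) eqn:Hwu.
  - rewrite (below_trans t Hwf w u v); auto. simpl. lia.
  - destruct (below t w v); simpl; lia.
Qed.

Lemma scale_count_preceding v : (v < tN t)%nat ->
  scale_count t n v
  = ((if scale_ge t n v then 1 else 0) + sumZ (preceding t n v) (scale_count t n))%Z.
Proof.
  intros Hv. unfold scale_count at 2. rewrite subtree_sum_preceding.
  transitivity (sumZ (nodes t) (fun w => if Nat.eqb w v then (if scale_ge t n v then 1 else 0)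
                                          else 0)
                + sumZ (nodes t) (fun w => if existsb (below t w) (preceding t n v)
                                           then (if scale_ge t n w then 1 else 0) else 0))%Z.
  2:{ f_equal. now apply sumZ_nodes_eqb. }
  unfold scale_count, subtree_sum. rewrite <- sumZ_add. apply sumZ_ext. intros w Hw.
  apply in_nodes in Hw.
  destruct (Nat.eqb w v) eqn:Hwv.
  - apply Nat.eqb_eq in Hwv as ->. rewrite below_refl.
    destruct (existsb _ _) eqn:Hcov; [|lia].
    now destruct (covered_below v v Hv Hcov).
  - apply Nat.eqb_neq in Hwv.
    destruct (existsb _ _) eqn:Hcov.
    + now rewrite (proj1 (covered_below v w Hw Hcov)).
    + destruct (below t w v) eqn:Hbv, (scale_ge t n w) eqn:Hs; try lia.
      destruct (preceding_cover v w Hw Hs Hbv Hwv) as [u [Hu Hwu]].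
      assert (existsb (below t w) (preceding t n v) = true) by (apply existsb_exists; eauto).
      congruence.
Qed.

End SubtreeSums.

Lemma znorm1_sum_if_le d l (p : nat -> bool) (g : nat -> zvec) :
  (znorm1 d (fun i => sumZ l (fun w => if p w then g w i else 0))
   <= sumZ l (fun w => if p w then znorm1 d (g w) else 0))%Z.
Proof.
  eapply Z.le_trans; [apply (znorm1_sumZ_le d l (fun w i => if p w then g w i else 0%Z))|].
  apply sumZ_le. intros w _. destruct (p w); [apply Z.le_refl|].
  rewrite znorm1_sumZ, sumZ_zero; auto. lia.
Qed.

Lemma momentum_subtree_sum t v i : momentum t v i = subtree_sum t v (fun w => tmode t w i).
Proof.
  unfold momentum. rewrite (fold_right_sumZ _ (fun w => tmode t w i)). apply sumZ_filter.
Qed.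

Section Momenta.
Variables (d : nat) (t : tree).
Hypothesis Hwf : tree_wf t.

Lemma norm_momentum_le v : (znorm1 d (momentum t v) <= subtree_K d t v)%Z.
Proof.
  rewrite (znorm1_ext d _ _ (fun i _ => momentum_subtree_sum t v i)). apply znorm1_sum_if_le.
Qed.

Lemma momentum_sub u v i : (u < tN t)%nat -> below t u v = true ->
  (momentum t v i - momentum t u i)%Z
  = sumZ (nodes t) (fun w => if between t u v w then tmode t w i else 0%Z).
Proof.
  intros Hu Huv. rewrite !momentum_subtree_sum, (subtree_sum_split t Hwf u v); auto. lia.
Qed.

Lemma norm_momentum_sub_le u v : (u < tN t)%nat -> below t u v = true ->
  (znorm1 d (fun i => momentum t v i - momentum t u i)
   <= sumZ (nodes t) (fun w => if between t u v w then znorm1 d (tmode t w) else 0))%Z.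
Proof.
  intros Hu Huv. rewrite (znorm1_ext d _ _ (fun i _ => momentum_sub u v i Hu Huv)).
  apply znorm1_sum_if_le.
Qed.

End Momenta.

Lemma dot_sub d om (a b : zvec) :
  dot d om (fun i => (a i - b i)%Z) = (dot d om a - dot d om b)%R.
Proof. unfold dot. induction (seq 0 d); simpl; [lra|]. rewrite IHl, minus_IZR. ring. Qed.

Section SmallDivisors.
Variables (d : nat) (om : rvec) (alpha : nat -> R) (m : nat -> nat).
Hypotheses (Halpha : is_alpha d om alpha) (Hm : is_m_seq alpha m).

Lemma alpha_antitone m1 m2 : (m1 <= m2)%nat -> alpha m2 <= alpha m1.
Proof.
  intros Hle. apply (proj2 (Halpha m1)). intros y [nu [Hpos [Hnorm ->]]].
  apply (proj1 (Halpha m2)). exists nu. repeat split; auto.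
  eapply Z.le_trans; [exact Hnorm|]. apply Z.pow_le_mono_r; lia.
Qed.

Lemma m_seq_monotone k1 k2 : (k1 <= k2)%nat -> (m k1 <= m k2)%nat.
Proof.
  destruct Hm as [_ Hstep]. induction 1; [lia|].
  destruct (Hstep m0) as [p [_ ->]]. lia.
Qed.

Lemma pow_lt_norm_of_small_dot M nu : (0 < znorm1 d nu)%Z ->
  Rabs (dot d om nu) < alpha M -> (2 ^ Z.of_nat M < znorm1 d nu)%Z.
Proof.
  intros Hpos Hsmall. apply Z.nle_gt. intros Hle.
  enough (alpha M <= Rabs (dot d om nu)) by lra.
  apply (proj1 (Halpha M)). exists nu. auto.
Qed.

(* [m_(k+1) = m_k + p_k + 1] with [alpha_(m_k) < 2 alpha_(m_k + p_k)]: a divisor below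
   [alpha_(m_k) / 2] forces [|nu| > 2^(m_k + p_k)]. *)
Lemma pow_m_le_norm n nu : ~ zvec_zero d nu ->
  (forall k, n = S k -> Rabs (dot d om nu) < alpha (m k) / 2) ->
  (2 ^ Z.of_nat (m n) <= 2 * znorm1 d nu)%Z.
Proof.
  intros Hnz Hsmall. pose proof (znorm1_pos d nu Hnz) as Hpos.
  destruct Hm as [Hm0 Hstep]. destruct n as [|k].
  - rewrite Hm0. change (2 ^ Z.of_nat 0)%Z with 1%Z. lia.
  - destruct (Hstep k) as [p [[Hp _] ->]].
    assert (Hlt : (2 ^ Z.of_nat (m k + p) < znorm1 d nu)%Z).
    { apply pow_lt_norm_of_small_dot; auto. specialize (Hsmall k eq_refl). lra. }
    rewrite Nat2Z.inj_add, Z.pow_add_r by lia. simpl (2 ^ Z.of_nat 1)%Z. lia.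
Qed.

End SmallDivisors.

Lemma Psi_succ_neq0 chi alpha m k x : is_cutoff chi -> 0 < alpha (m k) ->
  Psi chi alpha m (S k) x <> 0 -> Rabs x < alpha (m k) / 4.
Proof.
  intros (_ & _ & _ & _ & Hvanish) Hpos HPsi.
  destruct (Rlt_le_dec (Rabs x) (alpha (m k) / 4)) as [|Hge]; auto. exfalso.
  apply HPsi. simpl. unfold chi_n. rewrite (Hvanish (4 * x / alpha (m k))); [ring|].
  unfold Rdiv.
  rewrite Rabs_mult, Rabs_mult, Rabs_inv, (Rabs_pos_eq 4), (Rabs_pos_eq (alpha _)) by lra.
  apply (Rmult_le_reg_r (alpha (m k))); auto. field_simplify; lra.
Qed.

Lemma exists_argmax_lt (P : nat -> Prop) (f : nat -> Z) N : (exists x, (x < N)%nat /\ P x) ->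
  exists x0, P x0 /\ forall x, (x < N)%nat -> P x -> (f x <= f x0)%Z.
Proof.
  induction N as [|N IH]; intros [x [Hx Px]]; [lia|].
  destruct (classic (exists y, (y < N)%nat /\ P y)) as [Hex|Hnone].
  - destruct (IH Hex) as [x0 [P0 Hmax]].
    destruct (classic (P N /\ (f x0 < f N)%Z)) as [[PN Hlt]|Hnot].
    + exists N. split; auto. intros y Hy Py.
      destruct (Nat.eq_dec y N) as [->|]; [lia|]. specialize (Hmax y ltac:(lia) Py). lia.
    + exists x0. split; auto. intros y Hy Py.
      destruct (Nat.eq_dec y N) as [->|]; [|apply Hmax; auto; lia].
      apply Z.nlt_ge. intros Hlt. auto.
  - assert (Honly : forall y, (y < S N)%nat -> P y -> y = N).
    { intros y Hy Py. destruct (Nat.eq_dec y N); auto.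
      exfalso. apply Hnone. exists y. split; auto. lia. }
    exists x. split; auto. intros y Hy Py. rewrite (Honly y Hy Py), (Honly x Hx Px). lia.
Qed.

(* Crossing the boundary of [T] uses an entering or exiting line, which is too high in scale to
   lie in a cluster on scale [s]; this gives maximality. *)
Lemma cluster_of_boundary t T s :
  in_tree t T -> connected t T -> lines_le t s T ->
  (exists v, internal_line t T v /\ tscale t v = s) ->
  (forall w, entering t T w \/ exiting t T w -> (s < tscale t w)%Z) ->
  cluster t s T.
Proof.
  intros Hin Hconn Hle Hscale Hbdry.
  split; [auto|split; [auto|split; [auto|split; [|auto]]]].
  intros T' Hin' [_ Hconn'] Hle' Hsub.
  assert (Hedge : forall a b, sub_edge t T' a b -> (T a <-> T b)).
  { intros a b (Ha' & Hb' & Hab).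
    assert (Ha : (a < tN t)%nat) by auto.
    assert (Hsa : (tscale t a <= s)%Z) by (apply Hle'; repeat split; eauto).
    split; intros HT; apply NNPP; intros HnT.
    - assert (Hex : exiting t T a) by (split; [|split]; eauto).
      specialize (Hbdry a (or_intror Hex)). lia.
    - assert (Hen : entering t T a) by (split; [|split]; eauto).
      specialize (Hbdry a (or_introl Hen)). lia. }
  assert (Hpath : forall a b, clos_refl_sym_trans nat (sub_edge t T') a b -> (T a <-> T b)).
  { induction 1; firstorder. }
  intros y Hy. destruct Hconn as [[x Hx] _]. apply (Hpath x y); auto.
Qed.

Definition between_set (t : tree) (u v : nat) : nodeset :=
  fun x => (x < tN t)%nat /\ between t u v x = true.

Section BetweenSet.
Variables (t : tree) (u v : nat).
Hypotheses (Hwf : tree_wf t) (Hu : (u < tN t)%nat) (Huv : below t u v = true) (Hne : u <> v).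

Let T := between_set t u v.

Lemma between_set_spec x : T x <-> (x < tN t)%nat /\ below t x v = true /\ below t x u = false.
Proof.
  unfold T, between_set, between. rewrite Bool.andb_true_iff, Bool.negb_true_iff. tauto.
Qed.

Lemma between_set_top : T v.
Proof.
  pose proof (below_le t Hwf u v Hu Huv).
  apply between_set_spec. split; [lia|split; [apply below_refl|]].
  apply Bool.not_true_iff_false. intros Hvu. apply Hne. now apply (below_antisym t Hwf).
Qed.

Lemma between_set_parent x : T x -> x <> v -> exists p, tpar t x = Some p /\ T p /\ (p < x)%nat.
Proof.
  intros Hx Hxv. apply between_set_spec in Hx as (Hx & Hxv' & Hxu).
  destruct (below_inv t Hwf x v Hx Hxv') as [|[p (Hp & Hlt & Hpv)]]; [contradiction|].
  exists p. split; [|split]; auto. apply between_set_spec. split; [lia|split]; auto.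
  apply Bool.not_true_iff_false. intros Hpu.
  rewrite (below_parent t Hwf x p u Hx Hp Hpu) in Hxu. discriminate.
Qed.

Lemma between_set_parent_top p : tpar t v = Some p -> ~ T p.
Proof.
  intros Hp Tp. apply between_set_spec in Tp as (Hpt & Hpv & _).
  pose proof (below_le t Hwf p v Hpt Hpv).
  pose proof (below_le t Hwf u v Hu Huv).
  pose proof (parent_lt t Hwf v p ltac:(lia) Hp). lia.
Qed.

Lemma between_set_internal x : internal_line t T x <-> T x /\ x <> v.
Proof.
  split.
  - intros (_ & Hx & p & Hp & Tp). split; auto. intros ->. exact (between_set_parent_top p Hp Tp).
  - intros [Hx Hxv]. destruct (between_set_parent x Hx Hxv) as (p & Hp & Tp & _).
    split; [apply between_set_spec in Hx; tauto|split; eauto].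
Qed.

Lemma between_set_entering w : entering t T w <-> w = u.
Proof.
  split.
  - intros (Hw & HnT & p & Hp & Tp). apply between_set_spec in Tp as (_ & Hpv & Hpu).
    assert (Hwu : below t w u = true).
    { apply NNPP. intros Hwu. apply HnT, between_set_spec. repeat split; auto.
      - eapply below_parent; eauto.
      - now apply Bool.not_true_iff_false. }
    destruct (below_inv t Hwf w u Hw Hwu) as [|(p' & Hp' & _ & Hp'u)]; auto.
    congruence.
  - intros ->. split; [auto|split].
    + intros Tu. apply between_set_spec in Tu as (_ & _ & Huu).
      now rewrite below_refl in Huu.
    + destruct (below_inv t Hwf u v Hu Huv) as [|(p & Hp & Hlt & Hpv)]; [contradiction|].
      exists p. split; auto. apply between_set_spec. split; [lia|split; auto].
      apply Bool.not_true_iff_false. intros Hpu.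
      pose proof (below_le t Hwf p u ltac:(lia) Hpu). lia.
Qed.

Lemma between_set_exiting x : exiting t T x <-> x = v.
Proof.
  split.
  - intros (_ & Hx & Hout). apply NNPP. intros Hxv.
    destruct (between_set_parent x Hx Hxv) as (p & Hp & Tp & _).
    destruct Hout as [|(p' & Hp' & HnT)]; congruence.
  - intros ->. pose proof between_set_top as Tv. split; [apply Tv|split; auto].
    destruct (tpar t v) as [p|] eqn:Hp; [right; exists p; split; auto|left; auto].
    now apply between_set_parent_top.
Qed.

Lemma between_set_connected : connected t T.
Proof.
  assert (Hto_top : forall a, T a -> clos_refl_sym_trans nat (sub_edge t T) a v).
  { induction a as [a IH] using lt_wf_ind. intros Ta.
    destruct (Nat.eq_dec a v) as [->|Hav]; [apply rst_refl|].
    destruct (between_set_parent a Ta Hav) as (p & Hp & Tp & Hlt).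
    apply rst_trans with p; [apply rst_step; split; [|split]; auto | auto]. }
  split; [exists v; apply between_set_top|].
  intros a b Ta Tb. apply rst_trans with v; [|apply rst_sym]; auto.
Qed.

Lemma momentum_sub_between_single i : (forall x, T x <-> x = v) ->
  (momentum t v i - momentum t u i)%Z = tmode t v i.
Proof.
  intros HT. pose proof between_set_top as Tv.
  rewrite (momentum_sub t Hwf u v i Hu Huv), <- (sumZ_nodes_eqb t v (tmode t v i)) by apply Tv.
  apply sumZ_ext. intros w Hw. apply in_nodes in Hw.
  destruct (Nat.eqb w v) eqn:Hwv.
  - apply Nat.eqb_eq in Hwv as ->. now replace (between t u v v) with true by (symmetry; apply Tv).
  - apply Nat.eqb_neq in Hwv. destruct (between t u v w) eqn:Hb; auto.
    exfalso. apply Hwv, HT. split; auto.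
Qed.

End BetweenSet.

(* If [l_v] were preceded by a single line [l_u] of scale at least [n] carrying the same momentum,
   the lines between them would form a self-energy cluster. *)
Lemma single_preceding_momentum_neq d t n v u : tree_wf t -> renormalised d t ->
  (v < tN t)%nat -> scale_ge t n v = true -> preceding t n v = [u] ->
  ~ zvec_eq d (momentum t v) (momentum t u).
Proof.
  intros Hwf Hren Hv Hsv Hprec Heq.
  destruct (preceding_spec t n v u ltac:(rewrite Hprec; now left)) as (Hu & Hsu & Huv & Hne).
  set (T := between_set t u v).
  assert (Hlow : forall x, T x -> x <> v -> (tscale t x < Z.of_nat n)%Z).
  { intros x Tx Hxv. apply Z.nle_gt. intros Hsx. apply Z.leb_le in Hsx.
    apply between_set_spec in Tx as (Hx & Hxv' & Hxu); auto.
    destruct (preceding_cover t n Hwf v x Hx Hsx Hxv' Hxv) as (u' & Hu' & Hxu').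
    rewrite Hprec in Hu'. destruct Hu' as [<-|[]]. congruence. }
  apply Z.leb_le in Hsv, Hsu.
  pose proof (between_set_entering t u v Hwf Hu Huv Hne) as Hent.
  pose proof (between_set_exiting t u v Hwf Hu Huv Hne) as Hexi.
  pose proof (between_set_internal t u v Hwf Hu Huv Hne) as Hint.
  apply (Hren T).
  destruct (classic (exists x, internal_line t T x)) as [[x Hx]|Hnone].
  - left.
    destruct (exists_argmax_lt (internal_line t T) (tscale t) (tN t)) as (x0 & Hx0 & Hmax).
    { exists x. split; [apply Hx|auto]. }
    exists (tscale t x0). split.
    + apply cluster_of_boundary.
      * intros y Ty. apply Ty.
      * apply between_set_connected; auto.
      * intros y Hy. apply Hmax; auto. apply Hy.
      * eauto.
      * apply Hint in Hx0 as [Tx0 Hx0v]. specialize (Hlow x0 Tx0 Hx0v).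
        intros w [Hw|Hw]; [apply Hent in Hw|apply Hexi in Hw]; subst w; lia.
    + exists u, v. split; [now apply Hent|split; [intros w' Hw'; now apply Hent|]].
      split; [now apply Hexi|split; [intros v' Hv'; now apply Hexi|exact Heq]].
  - right. exists v.
    assert (HT : forall x, T x <-> x = v).
    { intros x. split.
      - intros Tx. apply NNPP. intros Hxv. apply Hnone. exists x. now apply Hint.
      - intros ->. now apply between_set_top. }
    split; [auto|split; [auto|split]].
    + intros i Hi.
      rewrite <- (momentum_sub_between_single t u v Hwf Hu Huv Hne i HT), (Heq i Hi). lia.
    + exists u. split; [now apply Hent|]. intros w' Hw'. now apply Hent.
Qed.

Section ScaleCount.
Variables (d : nat) (om : rvec) (alpha : nat -> R) (m : nat -> nat) (chi : R -> R) (t : tree).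
Hypotheses (Halpha : is_alpha d om alpha) (Hpos : forall j, (0 < alpha j)%R)
  (Hm : is_m_seq alpha m) (Hcut : is_cutoff chi) (Hwf : tree_wf t) (Hlab : labelled_ok d t)
  (Hren : renormalised d t).
Hypothesis HPsi : forall v, (v < tN t)%nat -> (0 <= tscale t v)%Z ->
  Psi chi alpha m (Z.to_nat (tscale t v)) (dot d om (momentum t v)) <> 0%R.

Lemma momentum_dot_small k v : (v < tN t)%nat -> (Z.of_nat (S k) <= tscale t v)%Z ->
  (Rabs (dot d om (momentum t v)) < alpha (m k) / 4)%R.
Proof.
  intros Hv Hs. specialize (HPsi v Hv ltac:(lia)).
  replace (Z.to_nat (tscale t v)) with (S (Z.to_nat (tscale t v) - 1)) in HPsi by lia.
  apply Psi_succ_neq0 in HPsi; auto.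
  enough (alpha (m (Z.to_nat (tscale t v) - 1)%nat) <= alpha (m k))%R by lra.
  apply (alpha_antitone d om); auto. apply (m_seq_monotone alpha); auto. lia.
Qed.

Lemma pow_m_le_norm_momentum n v : (v < tN t)%nat -> scale_ge t n v = true ->
  (2 ^ Z.of_nat (m n) <= 2 * znorm1 d (momentum t v))%Z.
Proof.
  intros Hv Hs. apply Z.leb_le in Hs. apply (pow_m_le_norm d om alpha); auto.
  - intros Hzero. pose proof (proj1 (proj2 Hlab v Hv) Hzero). lia.
  - intros k ->. pose proof (momentum_dot_small k v Hv Hs). pose proof (Hpos (m k)). lra.
Qed.

Lemma pow_m_le_norm_momentum_sub n u v : (u < tN t)%nat -> (v < tN t)%nat ->
  scale_ge t n u = true -> scale_ge t n v = true -> ~ zvec_eq d (momentum t v) (momentum t u) ->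
  (2 ^ Z.of_nat (m n) <= 2 * znorm1 d (fun i => momentum t v i - momentum t u i))%Z.
Proof.
  intros Hu Hv Hsu Hsv Hneq. apply Z.leb_le in Hsu, Hsv. apply (pow_m_le_norm d om alpha); auto.
  - intros Hzero. apply Hneq. intros i Hi. specialize (Hzero i Hi). lia.
  - intros k ->. rewrite dot_sub.
    pose proof (momentum_dot_small k u Hu Hsu). pose proof (momentum_dot_small k v Hv Hsv).
    pose proof (Rabs_triang (dot d om (momentum t v)) (- dot d om (momentum t u))).
    rewrite Rabs_Ropp in *. unfold Rminus. lra.
Qed.

Lemma preceding_count_bound n v :
  (forall u, In u (preceding t n v) ->
     (2 ^ Z.of_nat (m n) * (scale_count t n u + 1) <= 4 * subtree_K d t u)%Z) ->
  (2 ^ Z.of_nat (m n) * (sumZ (preceding t n v) (scale_count t n)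
                         + Z.of_nat (length (preceding t n v))) <= 4 * subtree_K d t v)%Z.
Proof.
  intros IH. rewrite <- sumZ_const_1, <- sumZ_add, <- sumZ_mul_l.
  eapply Z.le_trans; [apply sumZ_le, IH|]. rewrite sumZ_mul_l.
  apply Z.mul_le_mono_nonneg_l; [lia|]. apply subtree_sum_preceding_le; auto.
  intros w. apply znorm1_nonneg.
Qed.

Lemma scale_count_succ_bound n v : (v < tN t)%nat -> scale_ge t n v = true ->
  (2 ^ Z.of_nat (m n) * (scale_count t n v + 1) <= 4 * subtree_K d t v)%Z.
Proof.
  induction v as [v IH]
    using (well_founded_induction (Wf_nat.well_founded_ltof _ (fun v => tN t - v)%nat)).
  intros Hv Hsv.
  assert (IHprec : forall u, In u (preceding t n v) ->
            (2 ^ Z.of_nat (m n) * (scale_count t n u + 1) <= 4 * subtree_K d t u)%Z).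
  { intros u Hu. destruct (preceding_spec t n v u Hu) as (Hut & Hsu & Huv & Hne).
    pose proof (below_le t Hwf u v Hut Huv). apply IH; auto. unfold Wf_nat.ltof. lia. }
  pose proof (preceding_count_bound n v IHprec) as Hsum.
  pose proof (scale_count_preceding t n Hwf v Hv) as Hcount. rewrite Hsv in Hcount.
  assert (Hpow : (0 < 2 ^ Z.of_nat (m n))%Z) by (apply Z.pow_pos_nonneg; lia).
  destruct (preceding t n v) as [|u [|u' rest]] eqn:Hprec; cbn [sumZ length] in *.
  - pose proof (pow_m_le_norm_momentum n v Hv Hsv). pose proof (norm_momentum_le d t v). nia.
  - destruct (preceding_spec t n v u ltac:(rewrite Hprec; now left)) as (Hu & Hsu & Huv & Hne).
    specialize (IHprec u (or_introl eq_refl)).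
    pose proof (single_preceding_momentum_neq d t n v u Hwf Hren Hv Hsv Hprec) as Hneq.
    pose proof (pow_m_le_norm_momentum_sub n u v Hu Hv Hsu Hsv Hneq).
    pose proof (norm_momentum_sub_le d t Hwf u v Hu Huv).
    unfold subtree_K in *. rewrite (subtree_sum_split t Hwf u v); auto. nia.
  - rewrite !Nat2Z.inj_succ in Hsum. nia.
Qed.

Lemma scale_count_bound n v : (v < tN t)%nat ->
  (2 ^ Z.of_nat (m n) * scale_count t n v <= 4 * subtree_K d t v)%Z.
Proof.
  intros Hv. assert (Hpow : (0 < 2 ^ Z.of_nat (m n))%Z) by (apply Z.pow_pos_nonneg; lia).
  destruct (scale_ge t n v) eqn:Hsv.
  - pose proof (scale_count_succ_bound n v Hv Hsv). nia.
  - rewrite (scale_count_preceding t n Hwf v Hv), Hsv.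
    assert (IHprec : forall u, In u (preceding t n v) ->
              (2 ^ Z.of_nat (m n) * (scale_count t n u + 1) <= 4 * subtree_K d t u)%Z).
    { intros u Hu. destruct (preceding_spec t n v u Hu) as (Hut & Hsu & _).
      now apply scale_count_succ_bound. }
    pose proof (preceding_count_bound n v IHprec). nia.
Qed.

End ScaleCount.

Lemma count_scale_ge_root t n : tree_wf t -> Z.of_nat (count_scale_ge t n) = scale_count t n 0.
Proof.
  intros Hwf. unfold count_scale_ge, scale_count, subtree_sum. rewrite length_filter_sumZ.
  apply sumZ_ext. intros w Hw. apply in_nodes in Hw. now rewrite (below_root t Hwf w Hw).
Qed.

Lemma Kval_root d t : tree_wf t -> Kval d t = subtree_K d t 0.
Proof.
  intros Hwf. unfold Kval, subtree_K, subtree_sum.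
  rewrite (fold_right_sumZ _ (fun v => znorm1 d (tmode t v))).
  apply sumZ_ext. intros w Hw. apply in_nodes in Hw. now rewrite (below_root t Hwf w Hw).
Qed.

Lemma IZR_le_powerRZ_of_pow (M : nat) (a b : Z) : (2 ^ Z.of_nat M * a <= 4 * b)%Z ->
  IZR a <= powerRZ 2 (- (Z.of_nat M - 2)) * IZR b.
Proof.
  intros H. apply IZR_le in H. rewrite !mult_IZR, <- pow_IZR in H.
  assert (Hpow : 0 < 2 ^ M) by (apply pow_lt; lra).
  assert (Hinv : powerRZ 2 (- (Z.of_nat M - 2)) * 2 ^ M = 4).
  { rewrite pow_powerRZ, <- powerRZ_add by lra.
    replace (- (Z.of_nat M - 2) + Z.of_nat M)%Z with 2%Z by lia. simpl. ring. }
  apply (Rmult_le_reg_l (2 ^ M)); auto.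
  replace (2 ^ M * (powerRZ 2 (- (Z.of_nat M - 2)) * IZR b)) with (4 * IZR b)
    by (rewrite <- Hinv; ring).
  lra.
Qed.

Theorem lemma3p4 (d : nat) (om : rvec) (alpha : nat -> R) (m : nat -> nat)
  (chi : R -> R) (t : tree) :
  is_alpha d om alpha -> bryuno alpha -> is_m_seq alpha m -> is_cutoff chi ->
  tree_wf t -> labelled_ok d t -> renormalised d t ->
  (forall v, (v < tN t)%nat -> (0 <= tscale t v)%Z ->
     Psi chi alpha m (Z.to_nat (tscale t v)) (dot d om (momentum t v)) <> 0) ->
  forall n : nat,
    INR (count_scale_ge t n) <=
    powerRZ 2 (- (Z.of_nat (m n) - 2)) * IZR (Kval d t).
Proof.
  intros Halpha [Hpos _] Hm Hcut Hwf Hlab Hren HPsi n.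
  assert (Hroot : (0 < tN t)%nat) by (destruct Hwf; lia).
  rewrite INR_IZR_INZ, count_scale_ge_root, Kval_root by auto.
  apply IZR_le_powerRZ_of_pow.
  exact (scale_count_bound d om alpha m chi t Halpha Hpos Hm Hcut Hwf Hlab Hren HPsi n 0 Hroot).
Qed.
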